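(* Let $p_1,\ldots,p_m\in[0,1]$ and $\alpha\in[0,1]$, and let $h=h_\alpha$, $d_\alpha$, $z=z_\alpha$, $Z=Z_\alpha$ and $B=B_\alpha$ be as in the context. Then: (1) $d_\alpha(S)=d_\alpha(S\cap Z)$ for all $S\subseteq\{1,\ldots,m\}$; (2) $Z$ is minimal, i.e. if $Y\subseteq\{1,\ldots,m\}$ satisfies $d_\alpha(S)=d_\alpha(S\cap Y)$ for all $S\subseteq\{1,\ldots,m\}$, then $Z\subseteq Y$; (3) $d_\alpha(Z)=m-h$; (4) $Z\subseteq B$.
   Context: Setting: $m$ hypotheses with $p$-values $p_1,\ldots,p_m\in[0,1]$; let $r_1,\ldots,r_m$ be a permutation of $1,\ldots,m$ with $p_{r_1}\le\cdots\le p_{r_m}$, write $p_{(i)}=p_{r_i}$, $L_i=\{r_1,\ldots,r_i\}$ and $K_i=\{r_{m-i+1},\ldots,r_m\}$ for $0\le i\le m$. For $I\subseteq\{1,\ldots,m\}$, $p_{(i:I)}$ is the $i$-th smallest of $\{p_j:j\in I\}$. Simes local test: $I\in\mathcal{U}_\alpha$ iff there is $1\le i\le|I|$ with $|I|p_{(i:I)}\le i\alpha$. Closed testing: $\mathcal{X}_\alpha=\{I: J\in\mathcal{U}_\alpha\ \forall J\supseteq I\}$. For $S\subseteq\{1,\ldots,m\}$: $t_\alpha(S)=\max\{|I|: I\subseteq S, I\notin\mathcal{X}_\alpha\}$, $d_\alpha(S)=|S|-t_\alpha(S)$. $h_\alpha=\max\{0\le i\le m: K_i\notin\mathcal{U}_\alpha\}$.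 $z_\alpha=0$ if $h_\alpha=m$ and otherwise $z_\alpha=\min\{m-h_\alpha\le i\le m: h_\alpha p_{(i)}\le(i-m+h_\alpha+1)\alpha\}$; $Z_\alpha=L_{z_\alpha}$. Benjamini–Hochberg: $b_\alpha=\max\{1\le i\le m: m p_{(i)}\le i\alpha\}$ ($b_\alpha=0$ if no such $i$), $B_\alpha=L_{b_\alpha}$. *)

(* Indices {1..m} are represented by 'I_m (0-based);
   orders p_(i) keep the paper's 1-based i. *)
From mathcomp Require Import all_boot all_order all_algebra.
From mathcomp Require Import perm.
Set Implicit Arguments. Unset Strict Implicit. Unset Printing Implicit Defensive.
Import Order.TTheory GRing.Theory Num.Theory.
Local Open Scope ring_scope.

Section Defs.
Variables (R : realFieldType) (m : nat) (p : 'I_m -> R) (alpha : R).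

Definition pI (i : nat) (I : {set 'I_m}) : R :=
  nth 0 (sort <=%R [seq p j | j <- enum I]) i.-1.

Definition simesU (I : {set 'I_m}) : bool :=
  [exists i : 'I_#|I|, #|I|%:R * pI i.+1 I <= (i.+1)%:R * alpha].

Definition closedX (I : {set 'I_m}) : bool :=
  [forall J : {set 'I_m}, (I \subset J) ==> simesU J].

Definition t_alpha (S : {set 'I_m}) : nat :=
  (\max_(I : {set 'I_m} | (I \subset S) && ~~ closedX I) #|I|)%N.

Definition d_alpha (S : {set 'I_m}) : nat := (#|S| - t_alpha S)%N.

Variable r : {perm 'I_m}.

Definition pord (i : nat) : R := nth 0 [seq p (r j) | j <- enum 'I_m] i.-1.

Definition Lset (i : nat) : {set 'I_m} := [set r j | j : 'I_m & (j < i)%N].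
Definition Kset (i : nat) : {set 'I_m} := [set r j | j : 'I_m & (m - i <= j)%N].

Definition h_alpha : nat :=
  (\max_(i < m.+1 | ~~ simesU (Kset i)) (i : nat))%N.

(* z_alpha: 0 if h = m, otherwise least i in [m-h, m] with
   h p_(i) <= (i - m + h + 1) alpha (m is an unreachable default, the set
   being nonempty under the standing assumptions). *)
Definition z_alpha : nat :=
  if h_alpha == m then 0%N else
  head m [seq i <- iota (m - h_alpha) h_alpha.+1 |
           h_alpha%:R * pord i <= (i + h_alpha + 1 - m)%N%:R * alpha].

Definition Z_alpha : {set 'I_m} := Lset z_alpha.

Definition bh_cond (i : nat) : bool :=
  (0 < i)%N && (m%:R * pord i <= i%:R * alpha).

Definition b_alpha : nat :=
  (\max_(i < m.+1 | bh_cond i) (i : nat))%N.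

Definition B_alpha : {set 'I_m} := Lset b_alpha.

End Defs.

From mathcomp Require Import all_boot all_order all_algebra perm zify.
Set Implicit Arguments. Unset Strict Implicit. Unset Printing Implicit Defensive.
Import Order.TTheory GRing.Theory Num.Theory.
Local Open Scope ring_scope.

(* Write [below n u] for {j | n p_j <= u alpha}.  Simes rejects I iff
   |I :&: below |I| u| >= u for some 0 < u <= |I|.  Among sets of a given size, the set K_n
   of the n largest p-values meets every rank-closed set least, so h is the largest size of
   a Simes-accepted set, and closed testing accepts I iff Simes' test with the denominator
   |I| replaced by h does: |I :&: below h u| < u for all u > 0.  Thus t(S) is the largest
   size of such a set inside S.
   As K_h is accepted, a rank k >= m - h lies in [below h u] only if k - (m - h) <= u - 2;
   hence p-values outside Z never spoil acceptance, and d(S) = d(S :&: Z).  With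
   v = z - (m - h), every p-value of Z lies in [below h v.+1], so t(Z) <= v; by minimality
   of z the ranks m - h - 1, ..., z - 1 sit just above the Simes line, so any v of them form
   an accepted set.  So t(Z) = v = t(Z :\ j) for j in Z, which gives d(Z) = m - h and the
   minimality of Z.  Finally, the rank witnessing that K_(h+1) is Simes-rejected satisfies
   both the condition defining z and the Benjamini-Hochberg condition, so z <= b. *)

Lemma card_set_ord m (Q : pred nat) : #|[set k : 'I_m | Q k]| = count Q (iota 0 m).
Proof.
rewrite -val_enum_ord count_map cardsE cardE /enum_mem size_filter -enumT.
by rewrite (@eq_filter _ _ predT) // filter_predT; apply: eq_count.
Qed.

Lemma count_iota_range n a b :
  count (fun k => a <= k < b)%N (iota 0 n) = (minn n b - a)%N.
Proof.
elim: n => [|n IHn]; first by rewrite /= min0n.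
rewrite -addn1 iotaD count_cat IHn /= addn0 add0n.
by case: (leqP a n) => ha; case: (ltnP n b) => hb /=; lia.
Qed.

Lemma nth_sorted_count (T : eqType) (leT : rel T) (x0 : T) (s : seq T) (P : pred T) :
  transitive leT -> sorted leT s -> (forall x y, leT x y -> P y -> P x) ->
  forall k, (k < size s)%N -> P (nth x0 s k) = (k < count P s)%N.
Proof.
move=> leT_tr; elim: s => [//|x s IHs] /= x_s P_down k k_lt.
have s_sorted : sorted leT s := path_sorted x_s.
case Px: (P x).
  by case: k k_lt => [|k] k_lt //=; rewrite IHs.
have P_s : {in s, P =1 pred0}.
  move=> y /(allP (order_path_min leT_tr x_s)) le_xy /=.
  by apply/negbTE/negP => /(P_down _ _ le_xy); rewrite Px.
rewrite (eq_in_count P_s) count_pred0.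
by case: k k_lt => [|k] k_lt //=; apply: P_s; apply: mem_nth.
Qed.

Lemma discrete_ivt (f : nat -> nat) n c :
  (f 0 <= c <= f n)%N -> (forall i, i < n -> f i.+1 <= (f i).+1)%N ->
  exists2 i, (i <= n)%N & f i = c.
Proof.
elim: n => [|n IHn] c_range f_step; first by exists 0%N => //; lia.
have [c_le | c_gt] := leqP c (f n).
  have [i i_le fi] := IHn ltac:(lia) (fun i lt_in => f_step i (leqW lt_in)).
  by exists i => //; lia.
by exists n.+1 => //; have := f_step n (ltnSn n); lia.
Qed.

Lemma head_filter_iota a n (P : pred nat) x0 i :
  (a <= i < a + n)%N -> P i ->
  let z := head x0 [seq j <- iota a n | P j] in
  [/\ (a <= z <= i)%N, P z & forall j, (a <= j < z)%N -> ~~ P j].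
Proof.
elim: n a => [|n IHn] a i_range Pi; first by lia.
rewrite /=; case Pa: (P a) => /=.
  by split=> //; [lia | move=> j; lia].
have a_neq_i : a != i by apply: contraFneq Pa => ->.
have [z_range Pz z_min] := IHn a.+1 ltac:(lia) Pi.
split=> //; first lia.
move=> j j_range; have [->|j_neq_a] := eqVneq j a; first by rewrite Pa.
by apply: z_min; lia.
Qed.

Lemma leq_card_setI_subC (T : finType) (J K X : {set T}) :
  ~: J \subset X -> (#|J| <= #|K|)%N -> (#|J :&: X| <= #|K :&: X|)%N.
Proof.
move=> CJ_X le_JK.
have XDJ : X :\: J = ~: J by rewrite setDE; apply/setIidPr.
have XDK : (#|X :\: K| <= #|~: K|)%N by apply: subset_leq_card; rewrite setDE subsetIr.
have := cardsID J X; have := cardsID K X; have := cardsC J; have := cardsC K.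
by rewrite XDJ !(setIC X); lia.
Qed.

Lemma perm_onto (T : finType) (s : {perm T}) y : exists x, y = s x.
Proof. by exists (s^-1 y)%g; rewrite permKV. Qed.

Section ClosedSimes.
Variables (R : realFieldType) (m : nat) (p : 'I_m -> R) (alpha : R) (r : {perm 'I_m}).
Hypothesis (p_sorted : forall i j : 'I_m, (i <= j)%N -> p (r i) <= p (r j)).

Definition below (n u : nat) : {set 'I_m} := [set j | n%:R * p j <= u%:R * alpha].

Lemma simesUE (I : {set 'I_m}) :
  simesU p alpha I = [exists i : 'I_#|I|, i.+1 <= #|I :&: below #|I| i.+1|]%N.
Proof.
apply: eq_existsb => i; rewrite /pI /=.
set s := sort _ _.
have s_sorted : sorted <=%R s by apply: sort_sorted; exact: le_total.
have size_s : size s = #|I| by rewrite size_sort size_map cardE.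
rewrite (@nth_sorted_count _ _ 0 _ (fun x => #|I|%:R * x <= i.+1%:R * alpha)
           le_trans s_sorted); last 2 first.
- by move=> x y le_xy; apply: le_trans; apply: ler_wpM2l.
- by rewrite size_s.
congr (_ < _)%N; rewrite (seq.permP (permEl (perm_sort _ _))) count_map.
rewrite [#|I :&: _|]cardE (perm_size (enum_setI I _)) size_filter.
by apply: eq_count => j; rewrite /= inE.
Qed.

Lemma simesUP (I : {set 'I_m}) :
  reflect (exists2 u, 0 < u <= #|I| & u <= #|I :&: below #|I| u|)%N (simesU p alpha I).
Proof.
rewrite simesUE; apply: (iffP existsP) => [[i le_i] | [u u_range le_u]].
  by exists i.+1; rewrite ?ltn_ord.
by exists (Ordinal (n := #|I|) (m := u.-1) ltac:(lia)); rewrite /= prednK //; lia.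
Qed.

Lemma simesUPn (I : {set 'I_m}) :
  reflect (forall u, 0 < u -> u <= #|I| -> #|I :&: below #|I| u| < u)%N
          (~~ simesU p alpha I).
Proof.
apply: (iffP idP) => [nU u u_gt0 u_le | nU].
  rewrite ltnNge; apply: contra nU => le_u.
  by apply/simesUP; exists u; rewrite ?u_gt0.
by apply/simesUP => -[u /andP[u_gt0 u_le]]; rewrite leqNgt nU.
Qed.

Definition rank_set (Q : pred nat) : {set 'I_m} := [set r k | k : 'I_m & Q k].

Lemma mem_rank_set Q (k : 'I_m) : (r k \in rank_set Q) = Q k.
Proof. by rewrite mem_imset ?inE //; exact: perm_inj. Qed.

Lemma card_rank_set Q : #|rank_set Q| = count Q (iota 0 m).
Proof. by rewrite card_imset ?card_set_ord //; exact: perm_inj. Qed.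

Lemma rank_setS (Q Q' : pred nat) :
  (forall k, Q k -> Q' k) -> rank_set Q \subset rank_set Q'.
Proof.
move=> QQ'; apply/subsetP => j; have [k ->] := perm_onto r j.
by rewrite !mem_rank_set; apply: QQ'.
Qed.

Lemma card_rank_range a b : #|rank_set (fun k => a <= k < b)%N| = (minn m b - a)%N.
Proof. by rewrite card_rank_set count_iota_range. Qed.

Lemma LsetE i : Lset r i = rank_set (fun k => k < i)%N. Proof. by []. Qed.

Lemma KsetE i : Kset r i = rank_set (fun k => m - i <= k)%N. Proof. by []. Qed.

Lemma card_Lset i : (i <= m)%N -> #|Lset r i| = i.
Proof.
move=> le_im; rewrite LsetE card_rank_set (@eq_count _ _ (fun k => 0 <= k < i)%N) //.
by rewrite count_iota_range; lia.
Qed.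

Lemma card_Kset i : (i <= m)%N -> #|Kset r i| = i.
Proof.
move=> le_im; rewrite KsetE card_rank_set (@eq_in_count _ _ (fun k => m - i <= k < m)%N).
  by rewrite count_iota_range; lia.
by move=> k; rewrite mem_iota /= => k_lt; rewrite k_lt andbT.
Qed.

Lemma Kset0 : Kset r 0 = set0.
Proof.
apply/setP => j; have [k ->] := perm_onto r j.
by rewrite KsetE mem_rank_set inE subn0 leqNgt ltn_ord.
Qed.

Lemma KsetT : Kset r m = setT.
Proof.
by apply/setP => j; have [k ->] := perm_onto r j; rewrite KsetE mem_rank_set inE subnn.
Qed.

Lemma card_set_le_m (J : {set 'I_m}) : (#|J| <= m)%N.
Proof. by rewrite -[X in (_ <= X)%N]card_ord max_card. Qed.

Definition rank_closed (X : {set 'I_m}) :=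
  forall k k' : 'I_m, (k' <= k)%N -> r k \in X -> r k' \in X.

Lemma below_rank_closed n u : rank_closed (below n u).
Proof.
by move=> k k' le_k; rewrite !inE; apply: le_trans; apply: ler_wpM2l => //; apply: p_sorted.
Qed.

Lemma Kset_dichotomy X i :
  rank_closed X -> ~: Kset r i \subset X \/ Kset r i :&: X = set0.
Proof.
move=> X_closed.
case: (boolP [exists k : 'I_m, (m - i <= k)%N && (r k \in X)]) =>
  [/existsP[k /andP[k_ge k_X]] | /existsPn no_k].
  left; apply/subsetP => j; have [k' ->] := perm_onto r j.
  rewrite inE KsetE mem_rank_set -ltnNge => k'_lt.
  by apply: (X_closed k k') k_X; lia.
right; apply/setP => j; have [k ->] := perm_onto r j.
by rewrite !inE KsetE mem_rank_set; apply/negbTE/no_k.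
Qed.

Lemma Kset_card_setI_min X (J : {set 'I_m}) n :
  rank_closed X -> (n <= #|J|)%N -> (#|Kset r n :&: X| <= #|J :&: X|)%N.
Proof.
move=> X_closed le_nJ.
have le_nm : (n <= m)%N := leq_trans le_nJ (card_set_le_m J).
case: (Kset_dichotomy n X_closed) => [CK_X | ->]; last by rewrite cards0.
by apply: leq_card_setI_subC; rewrite // card_Kset.
Qed.

Lemma simesU_Kset (J : {set 'I_m}) : ~~ simesU p alpha J -> ~~ simesU p alpha (Kset r #|J|).
Proof.
move=> /simesUPn nUJ; apply/simesUPn => u u_gt0.
rewrite card_Kset ?card_set_le_m // => le_uJ.
apply: leq_ltn_trans (nUJ u u_gt0 le_uJ).
exact: Kset_card_setI_min (@below_rank_closed #|J| u) (leqnn _).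
Qed.

Local Notation h := (h_alpha p alpha r).

Lemma simesU_set0 : ~~ simesU p alpha set0.
Proof. by apply/simesUPn => u u_gt0; rewrite cards0; lia. Qed.

Lemma h_spec : (h <= m)%N /\ ~~ simesU p alpha (Kset r h).
Proof.
pose A (i : 'I_m.+1) := ~~ simesU p alpha (Kset r i).
have [|i Ai h_eq] := @eq_bigmax_cond _ A (fun i => i : nat).
  by apply/card_gt0P; exists ord0; rewrite /in_mem /= /A Kset0 simesU_set0.
by rewrite -[h]/(\max_(i | A i) i)%N h_eq -ltnS ltn_ord.
Qed.

Lemma h_le_m : (h <= m)%N. Proof. by case: h_spec. Qed.

Lemma simesU_Kset_h : ~~ simesU p alpha (Kset r h). Proof. by case: h_spec. Qed.

Lemma h_max i : (i <= m)%N -> ~~ simesU p alpha (Kset r i) -> (i <= h)%N.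
Proof.
move=> le_im nU.
exact: (@leq_bigmax_cond _ (fun i : 'I_m.+1 => ~~ simesU p alpha (Kset r i))
          (fun i => i : nat) (Ordinal (n := m.+1) (m := i) ltac:(lia)) nU).
Qed.

Lemma simesU_Kset_gt_h i : (h < i <= m)%N -> simesU p alpha (Kset r i).
Proof.
by case/andP=> lt_hi le_im; apply: contraLR lt_hi => /(h_max le_im); rewrite -leqNgt.
Qed.

Hypotheses (p_ge0 : forall j, 0 <= p j) (alpha_ge0 : 0 <= alpha).

Lemma belowS n n' u u' : (n' <= n)%N -> (u <= u')%N -> below n u \subset below n' u'.
Proof.
move=> le_n le_u; apply/subsetP => j; rewrite !inE => le_j.
apply: le_trans (le_trans le_j _); apply: ler_wpM2r => //; by rewrite ler_nat.
Qed.

Lemma ltn_of_mul_alpha (a b : nat) : a%:R * alpha < b%:R * alpha -> (a < b)%N.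
Proof.
apply: contraTT; rewrite -!leqNgt -leNgt => le_ba.
by apply: ler_wpM2r => //; rewrite ler_nat.
Qed.

Definition h_accepts (I : {set 'I_m}) : Prop :=
  forall u, (0 < u)%N -> (#|I :&: below h u| < u)%N.

Lemma h_acceptsS (I' I : {set 'I_m}) : I' \subset I -> h_accepts I -> h_accepts I'.
Proof.
move=> sI'I accI u u_gt0; apply: leq_ltn_trans (accI u u_gt0).
by apply: subset_leq_card; apply: setSI.
Qed.

Lemma h_accepts_Kset_h : h_accepts (Kset r h).
Proof.
move=> u u_gt0; have [le_uh | lt_hu] := leqP u h.
  by move/simesUPn: simesU_Kset_h; rewrite card_Kset ?h_le_m //; apply.
apply: leq_ltn_trans lt_hu; rewrite -[X in (_ <= X)%N](card_Kset h_le_m).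
exact/subset_leq_card/subsetIl.
Qed.

Lemma h_accepts_card (I : {set 'I_m}) : h_accepts I -> (#|I| <= h)%N.
Proof.
move=> accI; rewrite leqNgt; apply/negP => lt_hI.
have lt_hm : (h < m)%N := leq_trans lt_hI (card_set_le_m I).
have /simesUP[u /andP[u_gt0 _]] := @simesU_Kset_gt_h h.+1 ltac:(lia).
rewrite card_Kset // => le_uK.
have := accI u u_gt0; rewrite ltnNge => /negP; apply.
apply: leq_trans le_uK (leq_trans (Kset_card_setI_min (@below_rank_closed h.+1 u) lt_hI) _).
by apply: subset_leq_card; apply: setIS; apply: belowS.
Qed.

Lemma closedXN_h_accepts (I : {set 'I_m}) : ~~ closedX p alpha I -> h_accepts I.
Proof.
move=> /forallPn[J]; rewrite negb_imply => /andP[sIJ nUJ] u u_gt0.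
have le_Jh : (#|J| <= h)%N := h_max (card_set_le_m J) (simesU_Kset nUJ).
have [le_uJ | lt_Ju] := leqP u #|J|.
  apply: leq_ltn_trans (simesUPn J nUJ u u_gt0 le_uJ).
  by apply: subset_leq_card; apply: setISS sIJ (belowS le_Jh (leqnn u)).
apply: leq_ltn_trans lt_Ju; apply: leq_trans (subset_leq_card sIJ).
exact/subset_leq_card/subsetIl.
Qed.

Lemma exists_Kset_setU_card (I : {set 'I_m}) :
  (#|I| <= h)%N -> exists i, #|I :|: Kset r i| = h.
Proof.
move=> le_Ih; pose f i := #|I :|: Kset r i|.
have f_step i : (i < m)%N -> (f i.+1 <= (f i).+1)%N.
  move=> lt_im; have sKK : Kset r i \subset Kset r i.+1 by apply: rank_setS; lia.
  have sJ : I :|: Kset r i.+1 \subset (I :|: Kset r i) :|: (Kset r i.+1 :\: Kset r i).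
    apply/subsetP => j; rewrite !inE.
    by case: (j \in I); case: (j \in Kset r i); case: (j \in Kset r i.+1).
  have := leq_trans (subset_leq_card sJ) (leq_card_setU _ _).
  rewrite cardsD (setIidPr sKK) !card_Kset ?(ltnW lt_im) //.
  by rewrite /f; lia.
have f_range : (f 0%N <= h <= f m)%N.
  by rewrite /f Kset0 KsetT setU0 setUT cardsT card_ord le_Ih h_le_m.
by have [i _ fi] := discrete_ivt f_range f_step; exists i.
Qed.

Lemma h_accepts_setU_Kset (I : {set 'I_m}) i :
  h_accepts I -> #|I :|: Kset r i| = h -> ~~ simesU p alpha (I :|: Kset r i).
Proof.
move=> accI card_J; apply/simesUPn; rewrite card_J => u u_gt0 le_uh.
have [CK_X | KX0] := Kset_dichotomy i (@below_rank_closed h u).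
  have CJ_X : ~: (I :|: Kset r i) \subset below h u.
    by apply: subset_trans CK_X; rewrite setCS subsetUr.
  apply: leq_ltn_trans (leq_card_setI_subC (K := Kset r h) CJ_X _) _.
    by rewrite card_J card_Kset ?h_le_m.
  by move/simesUPn: simesU_Kset_h; rewrite card_Kset ?h_le_m //; apply.
by apply: leq_ltn_trans (accI u u_gt0); rewrite setIUl KX0 setU0.
Qed.

Lemma h_accepts_closedXN (I : {set 'I_m}) : h_accepts I -> ~~ closedX p alpha I.
Proof.
move=> accI; have [i card_J] := exists_Kset_setU_card (h_accepts_card accI).
apply/negP => /forallP/(_ (I :|: Kset r i)); rewrite subsetUl /=.
exact/negP/h_accepts_setU_Kset.
Qed.

Lemma closedXNP (I : {set 'I_m}) : reflect (h_accepts I) (~~ closedX p alpha I).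
Proof. by apply: (iffP idP); [apply: closedXN_h_accepts | apply: h_accepts_closedXN]. Qed.

Local Notation t := (t_alpha p alpha).
Local Notation d := (d_alpha p alpha).

Lemma leq_t_alpha (I S : {set 'I_m}) : I \subset S -> h_accepts I -> (#|I| <= t S)%N.
Proof.
move=> sIS accI; apply: (@leq_bigmax_cond _ _ (fun I : {set 'I_m} => #|I|) I).
by rewrite sIS; apply/closedXNP.
Qed.

Lemma t_alpha_leq (S : {set 'I_m}) (n : nat) :
  (forall I : {set 'I_m}, I \subset S -> h_accepts I -> (#|I| <= n)%N) -> (t S <= n)%N.
Proof. by move=> le_n; apply/bigmax_leqP => I /andP[sIS /closedXNP]; apply: le_n. Qed.

Lemma t_alpha_witness (S : {set 'I_m}) :
  exists I : {set 'I_m}, [/\ I \subset S, h_accepts I & #|I| = t S].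
Proof.
pose A (I : {set 'I_m}) := (I \subset S) && ~~ closedX p alpha I.
have [|I /andP[sIS /closedXNP accI] t_eq] := @eq_bigmax_cond _ A (fun I => #|I|).
  apply/card_gt0P; exists set0; rewrite /in_mem /= /A sub0set.
  exact/closedXNP/(h_acceptsS (sub0set _) h_accepts_Kset_h).
by exists I; split=> //; apply: esym.
Qed.

Lemma t_alpha_card (S : {set 'I_m}) : (t S <= #|S|)%N.
Proof. by apply: t_alpha_leq => I sIS _; apply: subset_leq_card. Qed.

Lemma t_alpha_setI_setD (S Y : {set 'I_m}) : (t S <= t (S :&: Y) + #|S :\: Y|)%N.
Proof.
have [I [sIS accI <-]] := t_alpha_witness S.
rewrite -(cardsID Y I); apply: leq_add.
  by apply: leq_t_alpha (setSI _ sIS) (h_acceptsS (subsetIl _ _) accI).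
by apply: subset_leq_card; apply: setSD.
Qed.

Lemma d_alphaS (S' S : {set 'I_m}) : S' \subset S -> (d S' <= d S)%N.
Proof.
move=> sS'S; have := t_alpha_setI_setD S S'; rewrite (setIidPr sS'S).
have := cardsID S' S; rewrite (setIidPr sS'S); have := t_alpha_card S'.
by rewrite /d_alpha; lia.
Qed.

Local Notation z := (z_alpha p alpha r).

Definition z_cond (i : nat) : bool :=
  h%:R * pord p r i <= (i + h + 1 - m)%N%:R * alpha.

Lemma pord_rank (k : 'I_m) : pord p r k.+1 = p (r k).
Proof. by rewrite /pord /= (nth_map k) ?size_enum_ord // nth_ord_enum. Qed.

Lemma z_witness : (h < m)%N ->
  exists2 i, (m - h <= i <= m)%N & z_cond i && bh_cond p alpha r i.
Proof.
move=> lt_hm.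
have /simesUP[u /andP[u_gt0 le_u] le_uK] := @simesU_Kset_gt_h h.+1 ltac:(lia).
rewrite card_Kset // in le_u le_uK.
(* [r k] carries the [u]-th smallest p-value of [Kset r h.+1]. *)
have k_lt : (m + u - h - 2 < m)%N by lia.
pose k := Ordinal k_lt.
have k_below : r k \in below h.+1 u.
  apply: contraLR le_uK => k_notin; rewrite -ltnNge.
  have sK : Kset r h.+1 :&: below h.+1 u \subset rank_set (fun k' => m - h.+1 <= k' < k)%N.
    apply/subsetP => j; have [k' ->] := perm_onto r j.
    rewrite inE KsetE !mem_rank_set => /andP[k'_ge k'_below].
    rewrite k'_ge ltnNge; apply: contra k_notin => le_kk'.
    exact: (@below_rank_closed h.+1 u k' k le_kk' k'_below).
  by apply: leq_ltn_trans (subset_leq_card sK) _; rewrite card_rank_range /=; lia.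
have p_k : h.+1%:R * p (r k) <= u%:R * alpha by rewrite inE in k_below.
exists k.+1; first by rewrite /=; lia.
apply/andP; split.
  rewrite /z_cond pord_rank (_ : (k.+1 + h + 1 - m)%N = u) /=; last lia.
  by apply: le_trans p_k; apply: ler_wpM2r => //; rewrite ler_nat.
rewrite /bh_cond ltn0Sn pord_rank /= -(ler_pM2l (ltr0Sn _ h)) mulrCA.
apply: le_trans (ler_wpM2l (ler0n _ m) p_k) _.
by rewrite mulrA -natrM mulrA -natrM; apply: ler_wpM2r => //; rewrite ler_nat /=; nia.
Qed.

Lemma z_spec : (h < m)%N ->
  [/\ (m - h <= z <= m)%N, (z <= b_alpha p alpha r)%N, z_cond z
    & forall j, (m - h <= j < z)%N -> ~~ z_cond j].
Proof.
move=> lt_hm; have [i i_range /andP[zc_i bh_i]] := z_witness lt_hm.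
have z_head : z = head m [seq j <- iota (m - h) h.+1 | z_cond j].
  by rewrite /z_alpha ifN // neq_ltn lt_hm.
have [/andP[z_ge le_zi] zc_z z_min] :=
  @head_filter_iota (m - h) h.+1 z_cond m i ltac:(lia) zc_i.
rewrite z_head; split=> //; first by rewrite z_ge; lia.
apply: leq_trans le_zi _.
exact: (@leq_bigmax_cond _ (fun i : 'I_m.+1 => bh_cond p alpha r i) (fun i => i : nat)
          (Ordinal (n := m.+1) (m := i) ltac:(lia)) bh_i).
Qed.

Lemma z_eq0 : (m <= h)%N -> z = 0%N.
Proof. by move=> le_mh; rewrite /z_alpha ifT // eqn_leq h_le_m. Qed.

Lemma z_ge : (m - h <= z)%N.
Proof.
have [lt_hm | le_mh] := ltnP h m; first by case: (z_spec lt_hm) => /andP[].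
by rewrite z_eq0 //; lia.
Qed.

Lemma z_le_m : (z <= m)%N.
Proof.
have [lt_hm | le_mh] := ltnP h m; first by case: (z_spec lt_hm) => /andP[].
by rewrite z_eq0.
Qed.

Lemma z_le_b_alpha : (z <= b_alpha p alpha r)%N.
Proof.
have [lt_hm | le_mh] := ltnP h m; first by case: (z_spec lt_hm).
by rewrite z_eq0.
Qed.

Lemma below_z (k : 'I_m) : (k < z)%N -> r k \in below h (z - (m - h)).+1.
Proof.
move=> lt_kz; have [lt_hm | le_mh] := ltnP h m; last by rewrite z_eq0 in lt_kz.
have [/andP[_ le_zm] _ zc_z _] := z_spec lt_hm.
have lt_zm : (z.-1 < m)%N by lia.
have z_eq : z = (Ordinal lt_zm).+1 by rewrite /= prednK //; lia.
apply: (@below_rank_closed h _ (Ordinal lt_zm) k); first by rewrite /=; lia.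
move: zc_z; rewrite /z_cond {1}z_eq pord_rank inE => p_z; apply: le_trans p_z _.
by apply: ler_wpM2r => //; rewrite ler_nat; lia.
Qed.

Lemma below_window (k : 'I_m) u :
  (m - h - 1 <= k)%N -> (k.+1 < z)%N -> r k \in below h u -> (k + h + 3 <= u + m)%N.
Proof.
move=> k_ge lt_kz k_below; have [lt_hm | le_mh] := ltnP h m; last by rewrite z_eq0 in lt_kz.
have [_ _ _ z_min] := z_spec lt_hm.
have := z_min k.+1 ltac:(lia); rewrite /z_cond pord_rank -ltNge => lt_k.
rewrite inE in k_below; have := ltn_of_mul_alpha (lt_le_trans lt_k k_below); lia.
Qed.

Lemma below_rank_ge (k : 'I_m) u :
  (m - h <= k)%N -> (0 < u)%N -> r k \in below h u -> (k + h + 2 <= u + m)%N.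
Proof.
move=> k_ge u_gt0 k_below.
have sK : rank_set (fun k' => m - h <= k' < k.+1)%N \subset Kset r h :&: below h u.
  apply/subsetP => j; have [k' ->] := perm_onto r j.
  rewrite inE KsetE !mem_rank_set => /andP[k'_ge k'_le]; rewrite k'_ge /=.
  exact: (@below_rank_closed h u k k').
have := leq_ltn_trans (subset_leq_card sK) (h_accepts_Kset_h u_gt0).
by rewrite card_rank_range; have := ltn_ord k; have := h_le_m; lia.
Qed.

Lemma h_accepts_window (I : {set 'I_m}) :
  I \subset rank_set (fun k => m - h - 1 <= k < z)%N -> (#|I| <= z - (m - h))%N ->
  h_accepts I.
Proof.
move=> sI card_I u u_gt0; have [lt_vu | le_uv] := ltnP (z - (m - h)) u.
  exact: leq_ltn_trans (leq_trans (subset_leq_card (subsetIl _ _)) card_I) lt_vu.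
have sIb : I :&: below h u \subset rank_set (fun k => m - h - 1 <= k < u + m - h - 2)%N.
  apply/subsetP => j; rewrite inE => /andP[j_I].
  move: (subsetP sI j j_I); have [k ->] := perm_onto r j.
  rewrite !mem_rank_set => /andP[k_ge lt_kz] k_below; rewrite k_ge /=.
  have [k_last | k_inner] := eqVneq k.+1 z.
    by have := @below_rank_ge k u ltac:(lia) u_gt0 k_below; lia.
  by have := below_window k_ge ltac:(lia) k_below; lia.
by have := subset_leq_card sIb; rewrite card_rank_range; have := z_ge; lia.
Qed.

Lemma h_accepts_card_Z (I : {set 'I_m}) :
  I \subset Lset r z -> h_accepts I -> (#|I| <= z - (m - h))%N.
Proof.
move=> sIZ accI; have := accI _ (ltn0Sn (z - (m - h))).
suff -> : I :&: below h (z - (m - h)).+1 = I by rewrite ltnS.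
apply/setIidPl/subsetP => j j_I; move: (subsetP sIZ j j_I).
by have [k ->] := perm_onto r j; rewrite LsetE mem_rank_set; apply: below_z.
Qed.

Lemma h_accepts_setU_outside_Z (I W : {set 'I_m}) :
  I \subset Lset r z -> h_accepts I -> W \subset ~: Lset r z -> h_accepts (I :|: W).
Proof.
move=> sIZ accI sWZ u u_gt0.
have sWb : W :&: below h u \subset rank_set (fun k => z <= k < u + m - h - 1)%N.
  apply/subsetP => j; rewrite inE => /andP[j_W].
  move: (subsetP sWZ j j_W); have [k ->] := perm_onto r j.
  rewrite inE LsetE !mem_rank_set -leqNgt => le_zk k_below; rewrite le_zk /=.
  by have := @below_rank_ge k u ltac:(have := z_ge; lia) u_gt0 k_below; lia.
rewrite setIUl; apply: leq_ltn_trans (leq_card_setU _ _) _.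
have := subset_leq_card sWb; rewrite card_rank_range.
have := accI u u_gt0; have := h_accepts_card_Z sIZ accI.
by have := subset_leq_card (subsetIl I (below h u)); have := z_ge; lia.
Qed.

Lemma card_upper_window : #|rank_set (fun k => m - h <= k < z)%N| = (z - (m - h))%N.
Proof. by rewrite card_rank_range (minn_idPr z_le_m). Qed.

Lemma h_accepts_upper_window : h_accepts (rank_set (fun k => m - h <= k < z)%N).
Proof.
apply: h_accepts_window; last by rewrite card_upper_window.
by apply: rank_setS => k /andP[k_ge ->]; rewrite andbT; lia.
Qed.

Local Notation Z := (Z_alpha p alpha r).

Lemma lt_h_m_of_mem_Z j : j \in Z -> (h < m)%N.
Proof.
have [k ->] := perm_onto r j; rewrite /Z_alpha LsetE mem_rank_set.
by apply: contraTT; rewrite -leqNgt => /z_eq0 ->.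
Qed.

Lemma t_alpha_Z : t Z = (z - (m - h))%N.
Proof.
apply/eqP; rewrite eqn_leq; apply/andP; split.
  by apply: t_alpha_leq => I sIZ accI; apply: h_accepts_card_Z.
rewrite -card_upper_window; apply: leq_t_alpha h_accepts_upper_window.
by rewrite /Z_alpha LsetE; apply: rank_setS => k /andP[].
Qed.

Lemma d_alpha_Z : d Z = (m - h)%N.
Proof.
rewrite /d_alpha t_alpha_Z /Z_alpha card_Lset ?z_le_m //.
by have := z_ge; lia.
Qed.

Lemma t_alpha_Z_setD1 j : j \in Z -> (z - (m - h) <= t (Z :\ j))%N.
Proof.
move=> j_Z; have lt_hm := lt_h_m_of_mem_Z j_Z.
move: j_Z; have [k ->] := perm_onto r j; rewrite /Z_alpha LsetE mem_rank_set => lt_kz.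
have [lt_k | ge_k] := ltnP k (m - h).
  rewrite -card_upper_window; apply: leq_t_alpha h_accepts_upper_window.
  apply/subsetP => j'; have [k' ->] := perm_onto r j'.
  rewrite !inE !mem_rank_set (inj_eq perm_inj) => /andP[k'_ge ->]; rewrite andbT.
  by apply: contraTneq k'_ge => ->; rewrite -ltnNge.
set W := rank_set (fun k' => m - h - 1 <= k' < z)%N.
have card_W : #|W :\ r k| = (z - (m - h))%N.
  have := cardsD1 (r k) W; rewrite mem_rank_set card_rank_range.
  rewrite (_ : (m - h - 1 <= k < z)%N = true) /=; last by lia.
  by have := z_le_m; lia.
rewrite -card_W; apply: leq_t_alpha; last first.
  by apply: h_accepts_window; [apply: subsetDl | rewrite card_W].
by apply: setSD; apply: rank_setS => k' /andP[].
Qed.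

Lemma d_alpha_setI_Z (S : {set 'I_m}) : d S = d (S :&: Z).
Proof.
have [I [sI accI card_I]] := t_alpha_witness (S :&: Z).
have sIZ : I \subset Lset r z := subset_trans sI (subsetIr _ _).
have accIW : h_accepts (I :|: S :\: Z).
  by apply: h_accepts_setU_outside_Z => //; rewrite setDE subsetIr.
have sIW : I :|: S :\: Z \subset S.
  by rewrite subUset (subset_trans sI (subsetIl _ _)) subsetDl.
have card_IW : #|I :|: S :\: Z| = (#|I| + #|S :\: Z|)%N.
  apply/eqP; rewrite (leq_card_setU _ _).2 disjoints_subset setCD.
  exact: subset_trans sIZ (subsetUr _ _).
have := leq_t_alpha sIW accIW; have := t_alpha_setI_setD S Z.
have := cardsID Z S; have := t_alpha_card (S :&: Z).
by rewrite /d_alpha card_IW card_I; lia.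
Qed.

Lemma Z_alpha_minimal (Y : {set 'I_m}) : (forall S, d S = d (S :&: Y)) -> Z \subset Y.
Proof.
move=> dY; apply/subsetP => j j_Z; apply: contraT => j_notY.
have sZY : Z :&: Y \subset Z :\ j.
  apply/subsetP => j'; rewrite !inE => /andP[-> j'_Y]; rewrite andbT.
  by apply: contraNneq j_notY => <-.
have := d_alphaS sZY; rewrite -dY d_alpha_Z.
have := t_alpha_Z_setD1 j_Z; have := lt_h_m_of_mem_Z j_Z; have := z_ge.
have := cardsD1 j Z; rewrite j_Z {1}/Z_alpha card_Lset ?z_le_m //.
by rewrite /d_alpha; lia.
Qed.

Lemma Z_alpha_sub_B_alpha : Z \subset B_alpha p alpha r.
Proof.
rewrite /Z_alpha /B_alpha !LsetE; apply: rank_setS => k lt_kz.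
exact: leq_trans lt_kz z_le_b_alpha.
Qed.

End ClosedSimes.

Theorem lemma4 (R : realFieldType) (m : nat) (p : 'I_m -> R) (alpha : R)
    (r : {perm 'I_m})
    (hp : forall j, 0 <= p j <= 1)
    (halpha : 0 <= alpha <= 1)
    (hsort : forall i j : 'I_m, (i <= j)%N -> p (r i) <= p (r j)) :
  [/\ (forall S : {set 'I_m},
         d_alpha p alpha S = d_alpha p alpha (S :&: Z_alpha p alpha r)),
      (forall Y : {set 'I_m},
         (forall S : {set 'I_m}, d_alpha p alpha S = d_alpha p alpha (S :&: Y)) ->
         Z_alpha p alpha r \subset Y),
      d_alpha p alpha (Z_alpha p alpha r) = (m - h_alpha p alpha r)%N
    & Z_alpha p alpha r \subset B_alpha p alpha r].
Proof.
have p_ge0 j : 0 <= p j by case/andP: (hp j).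
have alpha_ge0 : 0 <= alpha by case/andP: halpha.
split.
- by move=> S; apply: d_alpha_setI_Z.
- by move=> Y; apply: Z_alpha_minimal.
- exact: d_alpha_Z.
- exact: Z_alpha_sub_B_alpha.
Qed.
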